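(* Let $\tau^-\colon\underline{\mathscr{C}}\to\underline{\mathscr{C}}^-$ be a right adjoint of the inclusion functor $\underline{\mathscr{C}}^-\hookrightarrow\underline{\mathscr{C}}$. For $C\in\mathscr{C}$, let $K_C$ be obtained as follows: choose a distinguished triangle $S[-1]\to C\overset{a}{\to}T\to S$ with $S\in\mathcal{S},T\in\mathcal{T}$; choose a distinguished triangle $U\to T\overset{b}{\to}V[1]\to U[1]$ with $U\in\mathcal{U},V\in\mathcal{V}$; and choose a distinguished triangle $V\to K_C\overset{k_C}{\to}C\overset{b\circ a}{\to}V[1]$. Then the following are equivalent: (1) $\tau^-(C)=0$; (2) $K_C\in\mathcal{W}$; (3) $C\in\mathcal{T}$.
   Context: $\mathscr{C}$ is a triangulated category with shift $[1]$; subcategories are full, additive, closed under isomorphisms and direct summands. $\mathrm{Ext}^1(X,Y)=\mathscr{C}(X,Y[1])$. $\mathcal{M}\ast\mathcal{N}$ is the full subcategory of objects $C$ admitting a distinguished triangle $M\to C\to N\to M[1]$ with $M\in\mathcal{M}$, $N\in\mathcal{N}$. A cotorsion pair $(\mathcal{U},\mathcal{V})$: $\mathrm{Ext}^1(\mathcal{U},\mathcal{V})=0$ and $\mathscr{C}=\mathcal{U}\ast\mathcal{V}[1]$. Fix a twin cotorsion pair, i.e. cotorsion pairs $(\mathcal{S},\mathcal{T}),(\mathcal{U},\mathcal{V})$ with $\mathrm{Ext}^1(\mathcal{S},\mathcal{V})=0$. Put $\mathcal{W}=\mathcal{T}\cap\mathcal{U}$, $\mathscr{C}^-=\mathcal{S}[-1]\ast\mathcal{W}$.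 $\underline{\mathscr{C}}$ and $\underline{\mathscr{C}}^-$ are the ideal quotients of $\mathscr{C}$ and $\mathscr{C}^-$ by morphisms factoring through objects of $\mathcal{W}$ (such a right adjoint $\tau^-$ exists). *)

From HB Require Import structures.
From mathcomp Require Import all_boot all_algebra.

Set Implicit Arguments.
Unset Strict Implicit.
Unset Printing Implicit Defensive.
Import GRing.Theory.
Local Open Scope ring_scope.

Record PreaddCat := MkPreaddCat {
  Obj :> Type;
  Hom : Obj -> Obj -> zmodType;
  idm : forall X : Obj, Hom X X;
  compo : forall X Y Z : Obj, Hom Y Z -> Hom X Y -> Hom X Z;
  compA : forall (X Y Z W : Obj) (h : Hom Z W) (g : Hom Y Z) (f : Hom X Y),
      compo h (compo g f) = compo (compo h g) f;
  comp1m : forall (X Y : Obj) (f : Hom X Y), compo (idm Y) f = f;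
  compm1 : forall (X Y : Obj) (f : Hom X Y), compo f (idm X) = f;
  compDl : forall (X Y Z : Obj) (g1 g2 : Hom Y Z) (f : Hom X Y),
      compo (g1 + g2) f = compo g1 f + compo g2 f;
  compDr : forall (X Y Z : Obj) (g : Hom Y Z) (f1 f2 : Hom X Y),
      compo g (f1 + f2) = compo g f1 + compo g f2
}.
Arguments Hom {p}.
Arguments idm {p}.
Arguments compo {p X Y Z}.

Section Basic.
Variable C : PreaddCat.

Definition is_iso (X Y : C) (f : Hom X Y) : Prop :=
  exists g : Hom Y X, compo g f = idm X /\ compo f g = idm Y.

Definition isomorphic (X Y : C) : Prop := exists f : Hom X Y, is_iso f.

Definition is_zero (X : C) : Prop := idm X = 0.

Definition is_biproduct (X Y B : C) (i1 : Hom X B) (i2 : Hom Y B)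
  (p1 : Hom B X) (p2 : Hom B Y) : Prop :=
  [/\ compo p1 i1 = idm X, compo p2 i2 = idm Y, compo p1 i2 = 0, compo p2 i1 = 0
    & compo i1 p1 + compo i2 p2 = idm B].

Definition additive_cat : Prop :=
  (exists Z : C, is_zero Z) /\
  (forall X Y : C, exists (B : C) (i1 : Hom X B) (i2 : Hom Y B)
     (p1 : Hom B X) (p2 : Hom B Y), is_biproduct i1 i2 p1 p2).

(* Subcategories: full, additive, closed under isomorphisms and direct
   summands; represented by predicates on objects. *)
Definition subcategory (P : C -> Prop) : Prop :=
  [/\ (forall X Y : C, isomorphic X Y -> P X -> P Y),
      (exists Z : C, is_zero Z /\ P Z),
      (forall (X Y B : C) i1 i2 p1 p2, @is_biproduct X Y B i1 i2 p1 p2 ->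
          P X -> P Y -> P B)
    & (forall (X Y B : C) i1 i2 p1 p2, @is_biproduct X Y B i1 i2 p1 p2 ->
          P B -> P X)].

Definition factors_through (P : C -> Prop) (X Y : C) (f : Hom X Y) : Prop :=
  exists (W : C) (g : Hom X W) (h : Hom W Y), P W /\ f = compo h g.

End Basic.

Record TriData (C : PreaddCat) := MkTriData {
  sh : C -> C;
  shm : forall X Y : C, Hom X Y -> Hom (sh X) (sh Y);
  dist : forall X Y Z : C, Hom X Y -> Hom Y Z -> Hom Z (sh X) -> Prop
}.
Arguments sh {C}.
Arguments shm {C} t {X Y}.
Arguments dist {C} t {X Y Z}.

Section Tri.
Variables (C : PreaddCat) (t : TriData C).

Definition triangulated : Prop :=
  additive_cat C /\
  (forall X : C, shm t (idm X) = idm (sh t X)) /\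
  (forall (X Y Z : C) (g : Hom Y Z) (f : Hom X Y),
      shm t (compo g f) = compo (shm t g) (shm t f)) /\
  (forall (X Y : C) (f g : Hom X Y), shm t (f + g) = shm t f + shm t g) /\
  (forall (X Y : C), bijective (@shm C t X Y)) /\
  (forall Y : C, exists X : C, isomorphic (sh t X) Y) /\
  (forall (X Y Z X' Y' Z' : C) (f : Hom X Y) (g : Hom Y Z) (h : Hom Z (sh t X))
      (f' : Hom X' Y') (g' : Hom Y' Z') (h' : Hom Z' (sh t X'))
      (u : Hom X X') (v : Hom Y Y') (w : Hom Z Z'),
      is_iso u -> is_iso v -> is_iso w ->
      compo f' u = compo v f -> compo g' v = compo w g ->
      compo h' w = compo (shm t u) h ->
      dist t f g h -> dist t f' g' h') /\
  (forall (X Z : C), is_zero Z ->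
      dist t (idm X) (0 : Hom X Z) (0 : Hom Z (sh t X))) /\
  (forall (X Y : C) (f : Hom X Y), exists (Z : C) (g : Hom Y Z)
      (h : Hom Z (sh t X)), dist t f g h) /\
  (forall (X Y Z : C) (f : Hom X Y) (g : Hom Y Z) (h : Hom Z (sh t X)),
      dist t f g h <-> dist t g h (- shm t f)) /\
  (forall (X Y Z X' Y' Z' : C) (f : Hom X Y) (g : Hom Y Z) (h : Hom Z (sh t X))
      (f' : Hom X' Y') (g' : Hom Y' Z') (h' : Hom Z' (sh t X'))
      (u : Hom X X') (v : Hom Y Y'),
      dist t f g h -> dist t f' g' h' -> compo f' u = compo v f ->
      exists w : Hom Z Z', compo g' v = compo w g /\
                           compo h' w = compo (shm t u) h) /\
  (forall (X Y Z Z' Y' X' : C) (f : Hom X Y) (g : Hom Y Z)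
      (p1 : Hom Y Z') (q1 : Hom Z' (sh t X))
      (p2 : Hom Z Y') (q2 : Hom Y' (sh t X))
      (p3 : Hom Z X') (q3 : Hom X' (sh t Y)),
      dist t f p1 q1 -> dist t (compo g f) p2 q2 -> dist t g p3 q3 ->
      exists (u : Hom Z' Y') (v : Hom Y' X'),
        [/\ dist t u v (compo (shm t p1) q3),
            compo u p1 = compo p2 g, compo q2 u = q1,
            compo v p2 = p3 & compo q3 v = compo (shm t f) q2]).

Definition Ext1_vanish (P Q : C -> Prop) : Prop :=
  forall (X Y : C), P X -> Q Y -> forall f : Hom X (sh t Y), f = 0.

Definition cotorsion_pair (U V : C -> Prop) : Prop :=
  Ext1_vanish U V /\
  forall X : C, exists (M N : C) (f : Hom M X) (g : Hom X (sh t N))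
    (h : Hom (sh t N) (sh t M)), [/\ U M, V N & dist t f g h].

Definition twin_cotorsion_pair (S T U V : C -> Prop) : Prop :=
  [/\ cotorsion_pair S T, cotorsion_pair U V & Ext1_vanish S V].

Definition Wcore (T U : C -> Prop) : C -> Prop := fun X => T X /\ U X.

(* C^- = S[-1] * W : objects X with a triangle M -> X -> N -> M[1],
   M[1] in S and N in W *)
Definition Cminus (S W : C -> Prop) : C -> Prop := fun X =>
  exists (M N : C) (f : Hom M X) (g : Hom X N) (h : Hom N (sh t M)),
    [/\ S (sh t M), W N & dist t f g h].

(* tau : objects -> objects with counit eps : tau C -> C is a right adjoint
   of the inclusion of the ideal quotient C^-/[W] into C/[W]:
   tau C lies in C^- and for every X in C^-, composition with eps induces a
   bijection  (C/[W])(X, tau C) -> (C/[W])(X, C). *)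
Definition quot_right_adjoint (W Cm : C -> Prop) (tau : C -> C)
  (eps : forall X : C, Hom (tau X) X) : Prop :=
  forall Y : C, Cm (tau Y) /\
    forall X : C, Cm X ->
      (forall f : Hom X Y, exists g : Hom X (tau Y),
          factors_through W (f - compo (eps Y) g)) /\
      (forall g1 g2 : Hom X (tau Y),
          factors_through W (compo (eps Y) g1 - compo (eps Y) g2) ->
          factors_through W (g1 - g2)).

(* X is a zero object of the ideal quotient by [W] *)
Definition quot_zero (W : C -> Prop) (X : C) : Prop :=
  factors_through W (idm X).

End Tri.

From Pilot Require Import Defs.
From mathcomp Require Import all_boot ssralg.

(* Let [S[-1] -f1-> X -> T0 -> S] be the first triangle.  Each of the three
   conditions is equivalent to [f1 = 0].  For [X \in T] this is the
   weak-cokernel property of the triangle.  For [tau X = 0] it is the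
   adjunction: [S[-1]] lies in [C^-], and maps from [S[-1]] into [W \subset T]
   vanish.  For [K] one uses the octahedron on [X -a-> T0 -b-> V0[1]]: it
   yields a triangle [S -> K[1] -> U0[1] -> S[1]] whose first map vanishes
   exactly when [f1] does (as [Ext1(S, V) = 0]), making [K] a summand of [U0];
   and [U0 \in T \cap U], since [Ext1(S, -)] kills both [T0] and [V0]. *)

Set Implicit Arguments.
Unset Strict Implicit.
Unset Printing Implicit Defensive.
Import GRing.Theory.
Local Open Scope ring_scope.

Section Preadditive.
Variable C : PreaddCat.

Lemma comp0l (X Y Z : C) (f : Hom X Y) : compo (0 : Hom Y Z) f = 0.
Proof. by apply/(addrI (compo 0 f)); rewrite -compDl !addr0. Qed.

Lemma comp0r (X Y Z : C) (g : Hom Y Z) : compo g (0 : Hom X Y) = 0.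
Proof. by apply/(addrI (compo g 0)); rewrite -compDr !addr0. Qed.

Lemma compNl (X Y Z : C) (g : Hom Y Z) (f : Hom X Y) :
  compo (- g) f = - compo g f.
Proof. by apply/eqP; rewrite -addr_eq0 -compDl addNr comp0l. Qed.

Lemma compNr (X Y Z : C) (g : Hom Y Z) (f : Hom X Y) :
  compo g (- f) = - compo g f.
Proof. by apply/eqP; rewrite -addr_eq0 -compDr addNr comp0r. Qed.

Lemma compBl (X Y Z : C) (g1 g2 : Hom Y Z) (f : Hom X Y) :
  compo (g1 - g2) f = compo g1 f - compo g2 f.
Proof. by rewrite compDl compNl. Qed.

Lemma compBr (X Y Z : C) (g : Hom Y Z) (f1 f2 : Hom X Y) :
  compo g (f1 - f2) = compo g f1 - compo g f2.
Proof. by rewrite compDr compNr. Qed.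

Lemma subcategory_retract (P : C -> Prop) (X B : C) (i : Hom X B) (r : Hom B X) :
  subcategory P -> (exists (D : C) (j : Hom D B) (q : Hom B D),
    is_biproduct i j r q) -> P B -> P X.
Proof. by case=> _ _ _ summandP [D [j [q bp]]]; apply: summandP bp. Qed.

End Preadditive.

Lemma Wcore_zero (C : PreaddCat) (cT cU : C -> Prop) :
  subcategory cT -> subcategory cU -> exists Z : C, is_zero Z /\ Wcore cT cU Z.
Proof.
move=> [_ [ZT [ZT0 TZT]] _ _] [isoU [ZU [ZU0 UZU]] _ _].
exists ZT; split=> //; split=> //; apply: isoU UZU.
by exists 0, 0; rewrite !comp0l ZU0 ZT0.
Qed.

Section Triangulated.
Variables (C : PreaddCat) (t : TriData C).
Hypothesis Htri : triangulated t.

Lemma triangulated_zero : exists Z : C, is_zero Z.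
Proof. by case: Htri => [[]]. Qed.

Lemma shm1 (X : C) : shm t (idm X) = idm (sh t X).
Proof. by case: Htri => _ []. Qed.

Lemma shmM (X Y Z : C) (g : Hom Y Z) (f : Hom X Y) :
  shm t (compo g f) = compo (shm t g) (shm t f).
Proof. by case: Htri => _ [_ []]. Qed.

Lemma shm0 (X Y : C) : shm t (0 : Hom X Y) = 0.
Proof.
have [_ [_ [_ [shmD _]]]] := Htri.
by apply/(addrI (shm t (0 : Hom X Y))); rewrite -shmD !addr0.
Qed.

Lemma sh_is_zero (Z : C) : is_zero Z -> is_zero (sh t Z).
Proof. by rewrite /is_zero -shm1 => ->; apply: shm0. Qed.

Lemma shm_bij (X Y : C) : bijective (@shm C t X Y).
Proof. by case: Htri => _ [_ [_ [_ []]]]. Qed.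

Lemma dist_id_zero (X Z : C) :
  is_zero Z -> dist t (idm X) (0 : Hom X Z) (0 : Hom Z (sh t X)).
Proof. by case: Htri => _ [_ [_ [_ [_ [_ [_ [id_zero _]]]]]]]; apply: id_zero. Qed.

Lemma dist_cone (X Y : C) (f : Hom X Y) :
  exists (Z : C) (g : Hom Y Z) (h : Hom Z (sh t X)), dist t f g h.
Proof. by case: Htri => _ [_ [_ [_ [_ [_ [_ [_ []]]]]]]]. Qed.

Lemma dist_rotE (X Y Z : C) (f : Hom X Y) (g : Hom Y Z) (h : Hom Z (sh t X)) :
  dist t f g h <-> dist t g h (- shm t f).
Proof. by case: Htri => _ [_ [_ [_ [_ [_ [_ [_ [_ []]]]]]]]]. Qed.

Lemma dist_rot (X Y Z : C) (f : Hom X Y) (g : Hom Y Z) (h : Hom Z (sh t X)) :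
  dist t f g h -> dist t g h (- shm t f).
Proof. by case: (dist_rotE f g h). Qed.

Lemma dist_morph (X Y Z X' Y' Z' : C) (f : Hom X Y) (g : Hom Y Z)
    (h : Hom Z (sh t X)) (f' : Hom X' Y') (g' : Hom Y' Z')
    (h' : Hom Z' (sh t X')) (u : Hom X X') (v : Hom Y Y') :
  dist t f g h -> dist t f' g' h' -> compo f' u = compo v f ->
  exists w : Hom Z Z', compo g' v = compo w g /\ compo h' w = compo (shm t u) h.
Proof. by case: Htri => _ [_ [_ [_ [_ [_ [_ [_ [_ [_ [tr3 _]]]]]]]]]]; apply: tr3. Qed.

Lemma octahedral (X Y Z Z' Y' X' : C) (f : Hom X Y) (g : Hom Y Z)
    (p1 : Hom Y Z') (q1 : Hom Z' (sh t X)) (p2 : Hom Z Y') (q2 : Hom Y' (sh t X))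
    (p3 : Hom Z X') (q3 : Hom X' (sh t Y)) :
  dist t f p1 q1 -> dist t (compo g f) p2 q2 -> dist t g p3 q3 ->
  exists (u : Hom Z' Y') (v : Hom Y' X'),
    [/\ dist t u v (compo (shm t p1) q3), compo u p1 = compo p2 g,
        compo q2 u = q1, compo v p2 = p3 & compo q3 v = compo (shm t f) q2].
Proof. by case: Htri => _ [_ [_ [_ [_ [_ [_ [_ [_ [_ [_ tr4]]]]]]]]]]; apply: tr4. Qed.

Lemma shm_inj (X Y : C) : injective (@shm C t X Y).
Proof. exact/bij_inj/shm_bij. Qed.

Lemma shm_surj (X Y : C) (f : Hom (sh t X) (sh t Y)) :
  exists g : Hom X Y, f = shm t g.
Proof. by have [g _ gK] := shm_bij X Y; exists (g f); rewrite gK. Qed.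

Lemma dist_comp0 (X Y Z : C) (f : Hom X Y) (g : Hom Y Z) (h : Hom Z (sh t X)) :
  dist t f g h -> compo g f = 0.
Proof.
move=> fgh; have [Z0 Z0_0] := triangulated_zero.
have [w [-> _]] := dist_morph (u := idm X) (v := f) (dist_id_zero X Z0_0) fgh erefl.
exact: comp0r.
Qed.

Lemma dist_weak_coker (X Y Z W : C) (f : Hom X Y) (g : Hom Y Z)
    (h : Hom Z (sh t X)) (phi : Hom Y W) :
  dist t f g h -> compo phi f = 0 -> exists w : Hom Z W, phi = compo w g.
Proof.
move=> fgh phif0; have [Z0 Z0_0] := triangulated_zero.
have W_id : dist t (0 : Hom Z0 W) (idm W) (0 : Hom W (sh t Z0)).
  by apply/dist_rotE; rewrite shm0 oppr0; apply/dist_id_zero/sh_is_zero.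
have sq : compo 0 (0 : Hom X Z0) = compo phi f by rewrite comp0l phif0.
have [w [wg _]] := dist_morph fgh W_id sq.
by exists w; rewrite -wg comp1m.
Qed.

Lemma dist_weak_ker (X Y Z W : C) (f : Hom X Y) (g : Hom Y Z)
    (h : Hom Z (sh t X)) (psi : Hom W Y) :
  dist t f g h -> compo g psi = 0 -> exists w : Hom W X, psi = compo f w.
Proof.
move=> fgh gpsi0; have [Z0 Z0_0] := triangulated_zero.
have W_id : dist t (0 : Hom W Z0) (0 : Hom Z0 (sh t W)) (- shm t (idm W)).
  exact/dist_rot/dist_id_zero.
have sq : compo g psi = compo 0 (0 : Hom W Z0) by rewrite gpsi0 comp0l.
have [w [_]] := dist_morph W_id (dist_rot fgh) sq.
rewrite compNl compNr shm1 compm1 => /oppr_inj wE.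
have [w0 w0E] := shm_surj w.
by exists w0; apply: shm_inj; rewrite shmM -w0E wE.
Qed.

(* A split monomorphism is a biproduct inclusion: the complement is its cone. *)
Lemma split_mono_biproduct (X B : C) (i : Hom X B) (r : Hom B X) :
  compo r i = idm X ->
  exists (D : C) (j : Hom D B) (q : Hom B D), is_biproduct i j r q.
Proof.
move=> ri1; have [D [g [h igh]]] := dist_cone i.
have gi0 := dist_comp0 igh.
have h0 : h = 0.
  have := dist_comp0 (dist_rot (dist_rot igh)).
  rewrite compNl => /eqP; rewrite oppr_eq0 => /eqP hi0.
  by rewrite -[h]comp1m -shm1 -ri1 shmM -Defs.compA hi0 comp0r.
have h1D : compo h (idm D) = 0 by rewrite h0 comp0l.
have [s sE] := dist_weak_ker (dist_rot igh) h1D.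
pose j := s - compo i (compo r s).
have rj0 : compo r j = 0 by rewrite compBr Defs.compA ri1 comp1m subrr.
have gj1 : compo g j = idm D by rewrite compBr Defs.compA gi0 comp0l subr0 sE.
clearbody j; exists D, j, g; split => //.
pose e := idm B - compo i r - compo j g.
have ei0 : compo e i = 0.
  by rewrite !compBl comp1m -!Defs.compA ri1 gi0 compm1 comp0r subrr subr0.
have [e' e'E] := dist_weak_coker igh ei0.
have e'0 : e' = 0.
  by rewrite -[e']compm1 -gj1 Defs.compA -e'E !compBl comp1m -!Defs.compA rj0 gj1
             comp0r compm1 subr0 subrr.
move/eqP: e'E; rewrite e'0 comp0l subr_eq0 subr_eq => /eqP ->.
by rewrite addrC.
Qed.

Lemma subcategory_split (P : C -> Prop) (X B : C) (i : Hom X B) (r : Hom B X) :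
  subcategory P -> compo r i = idm X -> P B -> P X.
Proof. by move=> HP /split_mono_biproduct; apply: subcategory_retract. Qed.

Lemma subcategory_shift_split (P : C -> Prop) (X B : C)
    (i : Hom (sh t X) (sh t B)) (r : Hom (sh t B) (sh t X)) :
  subcategory P -> compo r i = idm (sh t X) -> P B -> P X.
Proof.
have [i' ->] := shm_surj i; have [r' ->] := shm_surj r.
rewrite -shmM -shm1 => HP /shm_inj; exact: subcategory_split.
Qed.

Lemma Ext1_vanish_hom0 (P Q : C -> Prop) (M Y : C) (phi : Hom M Y) :
  Ext1_vanish t P Q -> P (sh t M) -> Q Y -> phi = 0.
Proof. by move=> PQ PM QY; apply: shm_inj; rewrite shm0 (PQ _ _ PM QY (shm t phi)). Qed.

Lemma cotorsion_rightP (cS cT : C -> Prop) (Y : C) :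
  subcategory cT -> cotorsion_pair t cS cT ->
  (forall M : C, cS M -> forall phi : Hom M (sh t Y), phi = 0) -> cT Y.
Proof.
move=> HT [_ decomp] Sperp.
have [M [N [f [g [h [SM TN fgh]]]]]] := decomp (sh t Y).
have f0 : compo (idm (sh t Y)) f = 0 by rewrite (Sperp M SM f) comp0r.
have [w wg] := dist_weak_coker fgh f0.
exact: subcategory_shift_split HT (esym wg) TN.
Qed.

Lemma dist_fibre_T (cS cT cV : C -> Prop) (U0 T0 V0 : C) (f : Hom U0 T0)
    (b : Hom T0 (sh t V0)) (h : Hom (sh t V0) (sh t U0)) :
  subcategory cT -> cotorsion_pair t cS cT -> Ext1_vanish t cS cV ->
  dist t f b h -> cT T0 -> cV V0 -> cT U0.
Proof.
move=> HT ST SV fbh TT0 VV0; apply: (cotorsion_rightP HT ST) => M SM phi.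
have phi0 : compo (- shm t f) phi = 0.
  by rewrite compNl (ST.1 _ _ SM TT0 (compo (shm t f) phi)) oppr0.
have [w ->] := dist_weak_ker (dist_rot (dist_rot fbh)) phi0.
by rewrite (SV _ _ SM VV0 w) comp0r.
Qed.

Lemma triangle_hom0_iff_T (cS cT : C -> Prop) (X S' T0 : C) (f1 : Hom S' X)
    (a : Hom X T0) (h1 : Hom T0 (sh t S')) :
  subcategory cT -> Ext1_vanish t cS cT -> cS (sh t S') -> cT T0 ->
  dist t f1 a h1 -> f1 = 0 <-> cT X.
Proof.
move=> HT ST SS' TT0 fah; split=> [f10 | TX]; last exact: Ext1_vanish_hom0 ST SS' TX.
have f1_0 : compo (idm X) f1 = 0 by rewrite f10 comp0r.
have [w wa] := dist_weak_coker fah f1_0.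
exact: subcategory_split HT (esym wa) TT0.
Qed.

Section RightAdjoint.
Variables (cS cT cU : C -> Prop) (tau : C -> C) (eps : forall X : C, Hom (tau X) X).
Hypothesis ST : Ext1_vanish t cS cT.
Hypothesis Htau :
  @quot_right_adjoint C (Wcore cT cU) (Cminus t cS (Wcore cT cU)) tau eps.

Lemma tau_quot_zero_hom0 (X M : C) (phi : Hom M X) :
  subcategory cT -> subcategory cU -> cS (sh t M) ->
  quot_zero (Wcore cT cU) (tau X) -> phi = 0.
Proof.
move=> HT HU SM [W1 [g1 [h1 [[TW1 _] idE]]]].
have [Z0 [Z0_0 WZ0]] := Wcore_zero HT HU.
have CmM : Cminus t cS (Wcore cT cU) M.
  by exists M, Z0, (idm M), 0, 0; split => //; apply: dist_id_zero.
have [g [W2 [g2 [h2 [[TW2 _] phiE]]]]] := ((Htau X).2 M CmM).1 phi.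
move/eqP: phiE; rewrite (Ext1_vanish_hom0 g2 ST SM TW2) comp0r subr_eq0 => /eqP ->.
by rewrite -[g]comp1m idE -Defs.compA (Ext1_vanish_hom0 (compo g1 g) ST SM TW1) !comp0r.
Qed.

(* [tau X] lies in [S[-1] * W]; its [S[-1]]-part maps to zero in [X \in T],
   so [eps X] factors through the [W]-part, and the adjunction transfers this
   to [idm (tau X)]. *)
Lemma tau_quot_zero_of_T (X : C) : cT X -> quot_zero (Wcore cT cU) (tau X).
Proof.
move=> TX; have [CmtX adj] := Htau X.
have [M [N [f [g [h [SM WN fgh]]]]]] := CmtX.
have [w epsE] := dist_weak_coker fgh (Ext1_vanish_hom0 (compo (eps X) f) ST SM TX).
have := (adj _ CmtX).2 (idm _) 0.
rewrite compm1 comp0r !subr0; apply.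
by exists N, g, w.
Qed.

End RightAdjoint.

Section Cocone.
Variables (cS cT cU cV : C -> Prop).
Variables (X S' T0 U0 V0 K : C).
Variables (f1 : Hom S' X) (a : Hom X T0) (h1 : Hom T0 (sh t S')).
Variables (f2 : Hom U0 T0) (b : Hom T0 (sh t V0)) (h2 : Hom (sh t V0) (sh t U0)).
Variables (f3 : Hom V0 K) (k : Hom K X).
Hypotheses (SS' : cS (sh t S')) (VV0 : cV V0).
Hypotheses (Hd1 : dist t f1 a h1) (Hd2 : dist t f2 b h2)
  (Hd3 : dist t f3 k (compo b a)).

Lemma cocone_T_hom0 : Ext1_vanish t cS cT -> cT K -> f1 = 0.
Proof.
move=> ST TK.
have baf1 : compo (compo b a) f1 = 0.
  by rewrite -Defs.compA (dist_comp0 Hd1) comp0r.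
have [s ->] := dist_weak_ker (dist_rot Hd3) baf1.
by rewrite (Ext1_vanish_hom0 s ST SS' TK) comp0r.
Qed.

(* The octahedron on [X -a-> T0 -b-> V0[1]] gives a triangle
   [S'[1] -u-> K[1] -v-> U0[1] -> S'[2]] with [k[1] u = f1[1]] up to sign;
   when [f1 = 0], [u] factors through [V0[1]], hence vanishes, and [v] splits. *)
Lemma cocone_shift_split :
  Ext1_vanish t cS cV -> f1 = 0 ->
  exists (v : Hom (sh t K) (sh t U0)) (r : Hom (sh t U0) (sh t K)),
    compo r v = idm (sh t K).
Proof.
move=> SV f10.
have Hd3' := dist_rot (dist_rot Hd3).
have [u [v [uv _ ku _ _]]] :=
  octahedral (dist_rot Hd1) Hd3' (dist_rot Hd2).
rewrite f10 shm0 oppr0 in ku.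
have [w uE] := dist_weak_ker (dist_rot Hd3') ku.
rewrite (SV _ _ SS' VV0 w) comp0r in uE.
have u0 : compo (idm (sh t K)) u = 0 by rewrite uE comp0r.
have [r rE] := dist_weak_coker uv u0.
by exists v, r.
Qed.

Lemma cocone_W_of_hom0 :
  subcategory cT -> subcategory cU -> cotorsion_pair t cS cT ->
  Ext1_vanish t cS cV -> cU U0 -> cT T0 -> f1 = 0 -> Wcore cT cU K.
Proof.
move=> HT HU ST SV UU0 TT0 f10.
have [v [r rv]] := cocone_shift_split SV f10.
have TU0 := dist_fibre_T HT ST SV Hd2 TT0 VV0.
by split; apply: subcategory_shift_split rv _.
Qed.

End Cocone.

End Triangulated.

Theorem lemma3p10 (C : PreaddCat) (t : TriData C) (Htri : triangulated t)
  (cS cT cU cV : C -> Prop)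
  (HS : subcategory cS) (HT : subcategory cT)
  (HU : subcategory cU) (HV : subcategory cV)
  (Htwin : twin_cotorsion_pair t cS cT cU cV)
  (tau : C -> C) (eps : forall X : C, Hom (tau X) X)
  (Htau : @quot_right_adjoint C (Wcore cT cU)
            (Cminus t cS (Wcore cT cU)) tau eps)
  (X : C)
  (S' T0 : C) (f1 : Hom S' X) (a : Hom X T0) (h1 : Hom T0 (sh t S'))
  (HS' : cS (sh t S')) (HT0 : cT T0) (Hd1 : dist t f1 a h1)
  (U0 V0 : C) (f2 : Hom U0 T0) (b : Hom T0 (sh t V0)) (h2 : Hom (sh t V0) (sh t U0))
  (HU0 : cU U0) (HV0 : cV V0) (Hd2 : dist t f2 b h2)
  (K : C) (f3 : Hom V0 K) (k : Hom K X)
  (Hd3 : dist t f3 k (compo b a)) :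
  (quot_zero (Wcore cT cU) (tau X) <-> Wcore cT cU K) /\
  (Wcore cT cU K <-> cT X).
Proof.
have [STpair _ SV] := Htwin; have ST := STpair.1.
have f1_0_iff_T := triangle_hom0_iff_T Htri HT ST HS' HT0 Hd1.
have W_of_f1_0 := cocone_W_of_hom0 Htri HS' HV0 Hd1 Hd2 Hd3 HT HU STpair SV HU0 HT0.
have f1_0_of_W : Wcore cT cU K -> f1 = 0.
  by case=> TK _; apply: (cocone_T_hom0 Htri HS' Hd1 Hd3 ST TK).
have f1_0_of_tau := tau_quot_zero_hom0 Htri ST Htau f1 HT HU HS'.
split; split.
- by move/f1_0_of_tau/W_of_f1_0.
- by move/f1_0_of_W/f1_0_iff_T/(tau_quot_zero_of_T Htri ST Htau).
- by move/f1_0_of_W/f1_0_iff_T.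
- by move/f1_0_iff_T/W_of_f1_0.
Qed.
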